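(* Let $\mathcal{G}=(\mathcal{V},\mathcal{E})$ be an undirected graph with $n$ nodes and $E$ edges, in which every node has at least one neighbor, with incidence matrix $A\in\mathbb{R}^{n\times E}$. For each node $i$ let $f_i:\mathbb{R}\to\mathbb{R}$ be $M_i$-smooth and $\mu_i$-strongly convex, let $F(\lambda)=\sum_{i=1}^n f_i^*(u_i^TA\lambda)$ for $\lambda\in\mathbb{R}^E$, and let $\lambda^*$ be a minimizer of $F$. Consider the Set-wise Uniform Coordinate Descent (SU-CD) iteration: at each iteration $k$, a node $i$ is sampled uniformly at random from $\{1,\dots,n\}$, then an edge $\ell$ is sampled uniformly at random from $\mathcal{S}_i$, and one sets $\lambda^{k+1}=\lambda^k-\frac{1}{L}\nabla_\ell F(\lambda^k)e_\ell$. Then for every $k$, $$\mathbb{E}[F(\lambda^{k+1})\mid\lambda^k]-F(\lambda^* )\le\left(1-\frac{2\sigma_A}{L\,n\,N_{\max}}\right)\left[F(\lambda^k)-F(\lambda^* )\right].$$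
   Context: The incidence matrix $A$ has, in each column $\ell$ (edge $\ell\equiv(i,j)$), one entry $+1$ and one entry $-1$ in the rows of the endpoints $i,j$ (signs arbitrary), and zeros elsewhere. $u_i\in\mathbb{R}^n$ and $e_\ell\in\mathbb{R}^E$ are standard basis vectors; $f_i^*(y)=\sup_x(yx-f_i(x))$ is the Fenchel conjugate; $\nabla_\ell F(\lambda)=\partial F(\lambda)/\partial\lambda_\ell$. $\mathcal{S}_i$ is the set of edges incident to node $i$, $N_i=|\mathcal{S}_i|$, $N_{\max}=\max_iN_i$. $M_{\max}=\max_iM_i$, $\mu_{\min}=\min_i\mu_i$. Let $\gamma_{\max}$ be the largest eigenvalue and $\gamma^+_{\min}$ the smallest strictly positive eigenvalue of $A^TA$ (equivalently of the graph Laplacian $AA^T$). Then $L=\gamma_{\max}/\mu_{\min}$ (a smoothness constant of $F$) and $\sigma_A=\gamma^+_{\min}/M_{\max}$. The sampling at different iterations is independent. *)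

From HB Require Import structures.
From mathcomp Require Import all_boot all_order all_algebra.
From mathcomp Require Import all_classical all_reals all_analysis.
Set Implicit Arguments. Unset Strict Implicit. Unset Printing Implicit Defensive.
Import Order.TTheory GRing.Theory Num.Theory.
Local Open Scope ring_scope.
Local Open Scope classical_set_scope.

Section Defs.
Variable R : realType.

Definition incidence (n E : nat) (A : 'M[R]_(n, E)) : Prop :=
  forall l : 'I_E, exists i j : 'I_n,
    [/\ i != j, A i l = 1, A j l = -1 & forall k, k != i -> k != j -> A k l = 0].

Definition Sedges (n E : nat) (A : 'M[R]_(n, E)) (i : 'I_n) : {set 'I_E} :=
  [set l | A i l != 0].
Definition Ndeg (n E : nat) (A : 'M[R]_(n, E)) (i : 'I_n) : nat := #|Sedges A i|.
Definition Nmax (n E : nat) (A : 'M[R]_(n, E)) : nat := (\max_(i < n) Ndeg A i)%N.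

Definition smooth (M : R) (f : R -> R) : Prop :=
  (forall x, derivable f x 1) /\
  (forall x y, `|derive1 f x - derive1 f y| <= M * `|x - y|).

Definition strongly_convex (mu : R) (f : R -> R) : Prop :=
  forall x y t, 0 <= t <= 1 ->
    f (t * x + (1 - t) * y) <= t * f x + (1 - t) * f y - mu / 2 * t * (1 - t) * (x - y) ^+ 2.

Definition fconj (f : R -> R) (y : R) : R := sup (range (fun x => y * x - f x)).

Definition Fdual (n E : nat) (A : 'M[R]_(n, E)) (f : 'I_n -> R -> R)
  (lam : 'cV[R]_E) : R := \sum_(i < n) fconj (f i) ((A *m lam) i ord0).

Definition partial (E : nat) (G : 'cV[R]_E -> R) (lam : 'cV[R]_E) (l : 'I_E) : R :=
  derive1 (fun t : R => G (lam + t *: delta_mx l ord0)) 0.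

(* max / min of a finite family (max uses 0 as neutral, fine for positive
   families; min uses the max as neutral element, hence is the true minimum
   whenever n > 0) *)
Definition maxf (n : nat) (g : 'I_n -> R) : R := \big[Num.max/0]_(i < n) g i.
Definition minf (n : nat) (g : 'I_n -> R) : R := \big[Num.min/maxf g]_(i < n) g i.

(* SU-CD: conditional expectation of F(lambda^{k+1}) given lambda^k = lam:
   i uniform in {1..n}, then l uniform in S_i, step lam - (1/L) nabla_l F(lam) e_l *)
Definition SUCD_expect (n E : nat) (A : 'M[R]_(n, E)) (f : 'I_n -> R -> R)
  (L : R) (lam : 'cV[R]_E) : R :=
  n%:R^-1 * \sum_(i < n) ((Ndeg A i)%:R^-1 *
     \sum_(l in Sedges A i)
        Fdual A f (lam - (L^-1 * partial (Fdual A f) lam l) *: delta_mx l ord0)).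
End Defs.

(* Each conjugate f_i^* is squeezed between the quadratics with curvatures 1/M_i and
   1/mu_i around any point f_i'(x), where it equals f_i'(x) x - f_i(x); hence F is squeezed
   between two quadratics around every lam, with gradient A^T x(lam). Along an edge l the
   upper quadratic has curvature sum_i A_il^2 / mu_i <= gmax / mu_min = L, so the step
   -(1/L) grad_l F decreases F by at least (grad_l F)^2 / (2L). Every edge lies in exactly two
   sets S_i, each drawn with probability at least 1 / (n N_max), so the expected decrease is
   at least |grad F|^2 / (L n N_max). The lower quadratic, taken at lamstar, together with
   the fact that grad F = A^T x lies in the range of A^T, where A^T A >= gminp, gives the
   Polyak-Lojasiewicz inequality 2 sigma_A (F lam - F lamstar) <= |grad F lam|^2, and the
   two bounds combine into the linear rate. *)

From HB Require Import structures.
From mathcomp Require Import all_boot all_order all_algebra.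
From mathcomp Require Import all_classical all_reals all_analysis.
From mathcomp Require Import complex spectral sesquilinear.
From mathcomp Require Import ring lra.
Set Implicit Arguments. Unset Strict Implicit. Unset Printing Implicit Defensive.
Import Order.TTheory GRing.Theory Num.Theory.
Import numFieldNormedType.Exports.
Local Open Scope ring_scope.

Section RealSymmetricSpectral.
Variable R : rcfType.
Local Notation C := R[i].
Local Notation toC := (real_complex R).
Local Notation Remx := (map_mx (@complex.Re R)).
Local Notation Immx := (map_mx (@complex.Im R)).

Lemma Re_sum I (r : seq I) (P : pred I) (F : I -> C) :
  complex.Re (\sum_(i <- r | P i) F i) = \sum_(i <- r | P i) complex.Re (F i).
Proof. by apply: big_morph => // -[a b] [c d]. Qed.

Lemma Im_sum I (r : seq I) (P : pred I) (F : I -> C) :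
  complex.Im (\sum_(i <- r | P i) F i) = \sum_(i <- r | P i) complex.Im (F i).
Proof. by apply: big_morph => // -[a b] [c d]. Qed.

Lemma Remx_mul p q s (X : 'M[C]_(p, q)) (Y : 'M[C]_(q, s)) :
  Remx (X *m Y) = Remx X *m Remx Y - Immx X *m Immx Y.
Proof.
apply/matrixP => i k; rewrite !mxE Re_sum -sumrB.
by apply: eq_bigr => j _; rewrite !mxE; case: (X i j) => a b; case: (Y j k).
Qed.

Lemma Immx_mul p q s (X : 'M[C]_(p, q)) (Y : 'M[C]_(q, s)) :
  Immx (X *m Y) = Remx X *m Immx Y + Immx X *m Remx Y.
Proof.
apply/matrixP => i k; rewrite !mxE Im_sum -big_split.
apply: eq_bigr => j _; rewrite !mxE.
by case: (X i j) => a b; case: (Y j k) => c d /=; rewrite addrC.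
Qed.

Lemma Remx_real p q (B : 'M[R]_(p, q)) : Remx (map_mx toC B) = B.
Proof. by apply/matrixP => i j; rewrite !mxE. Qed.

Lemma Immx_real p q (B : 'M[R]_(p, q)) : Immx (map_mx toC B) = 0.
Proof. by apply/matrixP => i j; rewrite !mxE. Qed.

Lemma Remx_adj p q (X : 'M[C]_(p, q)) : Remx (X ^t*)%sesqui = (Remx X)^T.
Proof. by apply/matrixP => i j; rewrite !mxE; case: (X j i). Qed.

Lemma Immx_adj p q (X : 'M[C]_(p, q)) : Immx (X ^t*)%sesqui = - (Immx X)^T.
Proof. by apply/matrixP => i j; rewrite !mxE; case: (X j i). Qed.

(* W stacks the real and imaginary parts of a unitary eigenbasis of the complexified B:
   a real Parseval frame of eigenvectors, some of its 2m columns possibly zero. *)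
Lemma symmetric_eigenframe m (B : 'M[R]_m) : B^T = B ->
  exists (W : 'M[R]_(m, m + m)) (d : 'rV[R]_(m + m)),
    B *m W = W *m diag_mx d /\ W *m W^T = 1%:M.
Proof.
move=> Bsym; set BC := map_mx toC B.
have BCh : BC \is hermsymmx.
  apply/(is_hermitianmxP false Num.conj BC); rewrite expr0 scale1r.
  apply/matrixP => i j; rewrite !mxE -[in LHS]Bsym mxE.
  by apply/eqP; rewrite eq_complex /= oppr0 !eqxx.
have /hermitian_normalmx/orthomx_spectralP BCE := BCh.
have /mxOverP spR := hermitian_spectral_diag_real BCh.
set P := spectralmx BC in BCE; set sp := spectral_diag BC in BCE spR.
have Pu : P \is unitarymx := spectral_unitarymx BC.
set Q := (P ^t*)%sesqui.
have QQ : Q *m (Q ^t*)%sesqui = 1%:M.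
  by rewrite /Q trmxCK -invmx_unitary // mulVmx // unitarymx_unit.
have BQ : BC *m Q = Q *m diag_mx sp.
  by rewrite BCE invmx_unitary // -!mulmxA (unitarymxP Pu) mulmx1.
clearbody Q.
have Resp : Remx (diag_mx sp) = diag_mx (Remx sp).
  by apply/matrixP => i j; rewrite !mxE; case: (i == j); rewrite ?mulr1n ?mulr0n.
have Imsp : Immx (diag_mx sp) = 0.
  apply/matrixP => i j; rewrite !mxE; case: eqP => [->|_]; rewrite ?mulr1n ?mulr0n //.
  by case/complex_realP: (spR 0 j) => r ->.
exists (row_mx (Remx Q) (Immx Q)), (row_mx (Remx sp) (Remx sp)); split.
  rewrite mul_mx_row diag_mx_row mul_row_block !mulmx0 addr0 add0r.
  have := congr1 Remx BQ; rewrite !Remx_mul Remx_real Immx_real mul0mx subr0.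
  rewrite Imsp mulmx0 subr0 Resp => ->.
  have := congr1 Immx BQ; rewrite !Immx_mul Remx_real Immx_real mul0mx addr0.
  by rewrite Imsp mulmx0 add0r Resp => ->.
rewrite tr_row_mx mul_row_col.
have := congr1 Remx QQ; rewrite Remx_mul Remx_adj Immx_adj mulmxN opprK => ->.
by apply/matrixP => i j; rewrite !mxE; case: (i == j).
Qed.

End RealSymmetricSpectral.

Lemma neg_mul_le_sqr (R : realFieldType) (a b k : R) : 0 < k ->
  - (a * b) <= a * a / (2 * k) + k / 2 * (b * b).
Proof.
move=> k0; rewrite -subr_ge0.
have -> : a * a / (2 * k) + k / 2 * (b * b) - - (a * b) = (a + k * b) ^+ 2 / (2 * k).
  by field; rewrite gt_eqF.
by rewrite divr_ge0 ?sqr_ge0 // mulr_ge0 // ltW.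
Qed.

Section GramMatrix.
Variables (R : rcfType) (n m : nat) (A : 'M[R]_(n, m)).

Lemma trmx_mul_colE k (u v : 'cV[R]_k) : (u^T *m v) 0 0 = \sum_i u i 0 * v i 0.
Proof. by rewrite mxE; apply: eq_bigr => i _; rewrite mxE. Qed.

Lemma sum_sqr_col_eq0 k (u : 'cV[R]_k) : (\sum_i u i 0 ^+ 2 == 0) = (u == 0).
Proof.
apply/idP/eqP => [|->]; last by rewrite big1 // => i _; rewrite mxE expr0n.
rewrite psumr_eq0 => [/allP u0|i _]; last exact: sqr_ge0.
apply/matrixP => i j; rewrite ord1 mxE.
by have /implyP/(_ isT) := u0 i (mem_index_enum i); rewrite sqrf_eq0 => /eqP.
Qed.

Lemma gram_sym : (A^T *m A)^T = A^T *m A.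
Proof. by rewrite trmx_mul trmxK. Qed.

Lemma gram_quadE (u v : 'cV[R]_m) :
  (u^T *m (A^T *m A) *m v) 0 0 = \sum_i (A *m u) i 0 * (A *m v) i 0.
Proof. by rewrite -trmx_mul_colE trmx_mul !mulmxA. Qed.

Lemma gram_eigen (w : 'cV[R]_m) (d : R) : w != 0 -> A^T *m A *m w = d *: w ->
  [/\ eigenvalue (A^T *m A) d, 0 <= d & (d = 0 -> A *m w = 0)].
Proof.
move=> w0 Aw.
have quad : d * \sum_l w l 0 ^+ 2 = \sum_i (A *m w) i 0 ^+ 2.
  under eq_bigr do rewrite expr2; under [RHS]eq_bigr do rewrite expr2.
  by rewrite -gram_quadE -trmx_mul_colE -(mulmxA w^T) Aw -scalemxAr [RHS]mxE.
have wpos : 0 < \sum_l w l 0 ^+ 2.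
  by rewrite lt_def sum_sqr_col_eq0 w0 sumr_ge0 // => l _; exact: sqr_ge0.
split.
- apply/eigenvalueP; exists w^T; last by rewrite trmx_eq0.
  by rewrite -[w^T *m _]trmxK trmx_mul trmxK gram_sym Aw linearZ.
- by rewrite -(pmulr_lge0 _ wpos) quad sumr_ge0 // => i _; exact: sqr_ge0.
- by move=> d0; apply/eqP; rewrite -sum_sqr_col_eq0 -quad d0 mul0r.
Qed.

Lemma gram_frame : exists (W : 'M[R]_(m, m + m)) (d : 'rV[R]_(m + m)),
  [/\ forall u v : 'cV[R]_m,
        \sum_l u l 0 * v l 0 = \sum_j (W^T *m u) j 0 * (W^T *m v) j 0,
      forall u v : 'cV[R]_m,
        \sum_i (A *m u) i 0 * (A *m v) i 0 =
        \sum_j d 0 j * ((W^T *m u) j 0 * (W^T *m v) j 0) &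
      forall j, (forall u : 'cV[R]_m, (W^T *m u) j 0 = 0) \/
        [/\ eigenvalue (A^T *m A) (d 0 j), 0 <= d 0 j &
            d 0 j = 0 -> forall p : 'cV[R]_n, (W^T *m (A^T *m p)) j 0 = 0]].
Proof.
have [W [d [BW WW]]] := symmetric_eigenframe gram_sym.
have coordE j (u : 'cV[R]_m) : (W^T *m u) j 0 = ((col j W)^T *m u) 0 0.
  by rewrite tr_col -row_mul [RHS]mxE.
have WB : W^T *m (A^T *m A) = diag_mx d *m W^T.
  by rewrite -gram_sym -trmx_mul BW trmx_mul tr_diag_mx.
exists W, d; split.
- move=> u v; rewrite -!trmx_mul_colE trmx_mul trmxK mulmxA -(mulmxA u^T).
  by rewrite WW mulmx1.
- move=> u v; rewrite -gram_quadE -[u^T]mulmx1 -WW (mulmxA u^T) -(mulmxA _ W^T) WB.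
  have -> : u^T *m W *m (diag_mx d *m W^T) *m v =
            (W^T *m u)^T *m (diag_mx d *m (W^T *m v)) by rewrite trmx_mul trmxK !mulmxA.
  move: (W^T *m u) (W^T *m v) => a b.
  by rewrite trmx_mul_colE; apply: eq_bigr => j _; rewrite mul_diag_mx mxE mulrCA.
move=> j; have [Wj0|Wj0] := eqVneq (col j W) 0.
  by left=> u; rewrite coordE Wj0 trmx0 mul0mx mxE.
right; have BWj : A^T *m A *m col j W = d 0 j *: col j W.
  rewrite [in LHS]colE mulmxA BW -colE mul_mx_diag; apply/matrixP => i k.
  by rewrite !mxE mulrC.
have [eig d_ge0 d0A] := gram_eigen Wj0 BWj; split => // d0 p.
by rewrite coordE mulmxA -trmx_mul d0A // trmx0 mul0mx mxE.
Qed.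

Lemma gram_sqr_le (gmax : R) :
  (forall a, eigenvalue (A^T *m A) a -> a <= gmax) ->
  forall v : 'cV[R]_m, \sum_i (A *m v) i 0 ^+ 2 <= gmax * \sum_l v l 0 ^+ 2.
Proof.
move=> gmax_ge v; have [W [d [parseval quad frame]]] := gram_frame.
rewrite !(eq_bigr _ (fun i _ => expr2 _)).
rewrite quad parseval mulr_sumr; apply: ler_sum => j _.
case: (frame j) => [W0|[eig _ _]]; first by rewrite W0 !(mul0r, mulr0).
by rewrite ler_wpM2r ?gmax_ge // -expr2 sqr_ge0.
Qed.

(* A^T p has no component along eigenvectors of eigenvalue 0, so only eigenvalues
   >= gminp occur, and each coordinate is an AM-GM inequality. *)
Lemma gram_cross_le (gminp : R) : 0 < gminp ->
  (forall a, eigenvalue (A^T *m A) a -> 0 < a -> gminp <= a) ->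
  forall (p : 'cV[R]_n) (v : 'cV[R]_m) (c : R), 0 < c ->
    - \sum_l (A^T *m p) l 0 * v l 0 <=
    (\sum_l (A^T *m p) l 0 ^+ 2) / (2 * c * gminp) + c / 2 * \sum_i (A *m v) i 0 ^+ 2.
Proof.
move=> gminp_gt0 gminp_le p v c c_gt0; have [W [d [parseval quad frame]]] := gram_frame.
rewrite !(eq_bigr _ (fun i _ => expr2 _)).
rewrite parseval parseval quad -sumrN mulr_suml mulr_sumr -big_split /=.
apply: ler_sum => j _.
case: (frame j) => [W0|[eig d_ge0 dA0]].
  by rewrite !W0 !(mul0r, mulr0) oppr0 addr0.
have [d0|d_neq0] := eqVneq (d 0 j) 0.
  by rewrite dA0 // d0 !(mul0r, mulr0) oppr0 addr0.
have cg_gt0 : 0 < c * gminp by rewrite mulr_gt0.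
apply: le_trans (neg_mul_le_sqr _ _ cg_gt0) _.
set t := (W^T *m v) j 0 * _.
have -> : c * gminp / 2 * t = c / 2 * (gminp * t) by ring.
rewrite [2 * (c * _)]mulrA lerD2l; apply: ler_wpM2l; first by rewrite divr_ge0 ?ltW.
apply: ler_wpM2r; first by rewrite /t -expr2 sqr_ge0.
by apply: gminp_le; rewrite // lt_def d_neq0.
Qed.

End GramMatrix.

Section RealFunctions.
Variable R : realType.

Lemma lipschitz_continuous (g : R -> R) (K : R) : 0 < K ->
  (forall x y, `|g x - g y| <= K * `|x - y|) -> continuous g.
Proof.
move=> K0 Kg x; apply/cvgrPdist_lt => e e0; near=> z.
rewrite (le_lt_trans (Kg _ _)) // -ltr_pdivlMl //.
near: z; apply: (@cvgr_dist_lt _ _ _ _ _ id); first exact: cvg_id.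
by rewrite mulr_gt0 ?invr_gt0.
Unshelve. all: by end_near. Qed.

Lemma derivable_MVT (g : R -> R) : (forall x, derivable g x 1) ->
  forall a b, exists2 s, 0 <= s <= 1 & g b - g a = derive1 g (a + s * (b - a)) * (b - a).
Proof.
move=> dg a b; wlog ab : a b / a <= b.
  move=> MVTab; have [/MVTab //|/ltW ba] := lerP a b.
  have [s /andP[s0 s1] E] := MVTab b a ba; exists (1 - s).
    by apply/andP; split; lra.
  have -> : a + (1 - s) * (b - a) = b + s * (a - b) by ring.
  by rewrite -opprB E -mulrN opprB.
have gc : continuous g.
  by move=> x; apply: differentiable_continuous; exact/derivable1_diffP/dg.
have g' x : x \in `]a, b[ -> is_derive x 1 g (derive1 g x).
  by move=> _; rewrite derive1E; apply: derivableP.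
have [c /andP[ac cb] E] := MVT_segment ab g' (continuous_subspaceT gc).
have [<-|ab'] := eqVneq a b; first by exists 0; rewrite ?lexx ?ler01 // !subrr mulr0.
have ba_gt0 : 0 < b - a by rewrite subr_gt0 lt_def eq_sym ab' ab.
exists ((c - a) / (b - a)); last by rewrite divfK ?gt_eqF // addrCA subrr addr0.
by rewrite divr_ge0 ?subr_ge0 //= ler_pdivrMr // mul1r lerD2r.
Qed.

Lemma le0_of_le_small_multiples (K c : R) :
  (forall t, 0 < t <= 1 -> K <= t * c) -> K <= 0.
Proof.
move=> Kc; rewrite leNgt; apply/negP => K0.
have k0 : 0 < `|c| + 1 by rewrite ltr_pwDr.
pose t := Num.min 1 (K / (2 * (`|c| + 1))).
have t0 : 0 < t by rewrite lt_min ltr01 divr_gt0 // mulr_gt0.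
have /Kc Ktc : 0 < t <= 1 by rewrite t0 ge_min lexx.
have tk : t * (`|c| + 1) <= K / 2.
  by rewrite -ler_pdivlMr // -mulrA -invfM ge_min lexx orbT.
have ck : c <= `|c| + 1 by rewrite (le_trans (ler_norm c)) // lerDl.
have := le_trans (ler_wpM2l (ltW t0) ck) tk; lra.
Qed.

Lemma derive1_0_of_sqr_error (phi : R -> R) (l C : R) :
  (forall t, `|phi t - phi 0 - l * t| <= C * t ^+ 2) -> derive1 phi 0 = l.
Proof.
move=> err; apply: cvg_lim => //.
have C'0 : 0 < `|C| + 1 by rewrite ltr_pwDr.
apply/cvgrPdist_le => e e0; near=> h.
have h0 : h != 0 by near: h; exact: nbhs_dnbhs_neq.
have he : `|h| <= e / (`|C| + 1) by near: h; apply: dnbhs0_le; rewrite divr_gt0.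
have -> : l - h^-1 *: (phi (h + 0) - phi 0) = - (h^-1 * (phi h - phi 0 - l * h)).
  by rewrite addr0 /GRing.scale /=; field.
rewrite normrN normrM normrV ?unitfE // ler_pdivrMl ?normr_gt0 //.
apply: (le_trans (err h)); rewrite -(real_normK (num_real h)) expr2 mulrA.
rewrite [_ * e]mulrC; apply: ler_wpM2r => //.
move: he; rewrite ler_pdivlMr // => he; apply: le_trans he; rewrite [leRHS]mulrC.
by apply: ler_wpM2r => //; rewrite (le_trans (ler_norm C)) // lerDl.
Unshelve. all: by end_near. Qed.

End RealFunctions.

Section SmoothStronglyConvex.
Variables (R : realType) (f : R -> R) (M mu : R).
Hypotheses (M_gt0 : 0 < M) (mu_gt0 : 0 < mu).
Hypotheses (f_smooth : smooth M f) (f_sconvex : strongly_convex mu f).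
Local Notation f' := (derive1 f).

Lemma sconvex_ge_tangent x0 x : f x0 + f' x0 * (x - x0) + mu / 2 * (x - x0) ^+ 2 <= f x.
Proof.
have [df f'_lip] := f_smooth; set d := x - x0.
suff : f x0 + f' x0 * d + mu / 2 * d ^+ 2 - f x <= 0 by lra.
apply: (@le0_of_le_small_multiples _ _ ((M + mu / 2) * d ^+ 2)) => t /andP[t0 t1].
have := f_sconvex x x0 (t:=t); rewrite ltW // t1 => /(_ isT).
have -> : t * x + (1 - t) * x0 = x0 + t * d by rewrite /d; ring.
move=> conv.
have [s /andP[s0 s1]] := derivable_MVT df x0 (x0 + t * d).
rewrite addrAC subrr add0r; set c := x0 + s * (t * d) => E.
have dev : `|(f' c - f' x0) * (t * d)| <= M * (t * d) ^+ 2.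
  rewrite normrM -(real_normK (num_real (t * d))) expr2 mulrA.
  apply: ler_wpM2r => //; apply: le_trans (f'_lip c x0) _.
  apply: ler_wpM2l; first exact: ltW.
  by rewrite /c addrAC subrr add0r normrM ger0_norm // ler_piMl.
move: dev; rewrite ler_norml => /andP[dev _].
by rewrite -(ler_pM2l t0); move: conv E dev; rewrite /d; nra.
Qed.

(* The mean value theorem applied to psi rather than to f, using psi' y * (y - x0) <= 0,
   gives the constant M/2 instead of M. *)
Lemma smooth_le_quadratic x0 x : f x <= f x0 + f' x0 * (x - x0) + M / 2 * (x - x0) ^+ 2.
Proof.
have [df f'_lip] := f_smooth.
pose psi z := f z - f' x0 * z - M / 2 * (z - x0) ^+ 2.
have psi' (y : R) : is_derive y (1 : R) psi (f' y - f' x0 - M / 2 * (2 * (y - x0))).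
  have -> : psi = f - f' x0 *: id - M / 2 *: (id - cst x0) ^+ 2 by apply/funext.
  have : is_derive y (1 : R) f (f' y) by rewrite derive1E; exact: derivableP.
  by move=> ?; apply: is_derive_eq; rewrite subr0 /= expr1 /GRing.scale /= !mulr1.
have dpsi y : derivable psi y 1 by exact: ex_derive.
have [s /andP[s0 s1]] := derivable_MVT dpsi x0 x.
rewrite derive1E derive_val; set c := x0 + s * (x - x0) => E.
have dev : (f' c - f' x0) * (x - x0) <= M * s * (x - x0) ^+ 2.
  apply: le_trans (ler_norm _) _; rewrite normrM -(real_normK (num_real (x - x0))).
  rewrite expr2 mulrA; apply: ler_wpM2r => //; apply: le_trans (f'_lip c x0) _.
  by rewrite /c addrAC subrr add0r normrM ger0_norm // mulrA.
have : psi x - psi x0 <= 0 by rewrite E /c; nra.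
by rewrite /psi subrr expr0n /= mulr0 subr0; lra.
Qed.

Lemma derive1_strongly_monotone x y : mu * (x - y) ^+ 2 <= (f' x - f' y) * (x - y).
Proof. by have := sconvex_ge_tangent x y; have := sconvex_ge_tangent y x; nra. Qed.

Lemma derive1_surjective (y : R) : exists x : R, f' x = y.
Proof.
have [_ f'_lip] := f_smooth.
have f'_cont : continuous f' := lipschitz_continuous M_gt0 f'_lip.
(* mu r = (y - f' 0)^2 + 1 exceeds |y - f' 0|, so strong monotonicity brackets y. *)
pose r := ((y - f' 0) ^+ 2 + 1) / mu.
have r_gt0 : 0 < r by rewrite divr_gt0 // ltr_pwDr ?sqr_ge0.
have mur : mu * r = (y - f' 0) ^+ 2 + 1 by rewrite mulrC divfK ?gt_eqF.
clearbody r.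
have f'r : y <= f' r.
  have := derive1_strongly_monotone r 0; rewrite !subr0 expr2 mulrA ler_pM2r //.
  by have := sqr_ge0 (y - f' 0 - 1); nra.
have f'Nr : f' (- r) <= y.
  have := derive1_strongly_monotone 0 (- r); rewrite !sub0r opprK expr2 mulrA ler_pM2r //.
  by have := sqr_ge0 (y - f' 0 + 1); nra.
have Nrr : - r <= r by lra.
have f'y : Num.min (f' (- r)) (f' r) <= y <= Num.max (f' (- r)) (f' r).
  by rewrite ge_min f'Nr le_max f'r orbT.
by have [x _ <-] := IVT Nrr (continuous_subspaceT f'_cont) f'y; exists x.
Qed.

Lemma fenchel_le_tangent x u : f' x * u - f u <= f' x * x - f x.
Proof.
have := sconvex_ge_tangent x u.
have : 0 <= mu / 2 * (u - x) ^+ 2 by rewrite mulr_ge0 ?sqr_ge0 // divr_ge0 // ltW.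
lra.
Qed.

Lemma fconjE x : fconj f (f' x) = f' x * x - f x.
Proof.
apply/le_anti/andP; split.
  by apply: ge_sup => [|_ [u _ <-]]; [exists (f' x * x - f x), x | exact: fenchel_le_tangent].
apply: ub_le_sup; last by exists x.
by exists (f' x * x - f x) => _ [u _ <-]; exact: fenchel_le_tangent.
Qed.

Lemma fconj_ge y u : y * u - f u <= fconj f y.
Proof. by have [x <-] := derive1_surjective y; rewrite fconjE fenchel_le_tangent. Qed.

Lemma fconj_le_quadratic x s :
  fconj f (f' x + s) <= fconj f (f' x) + s * x + s ^+ 2 / (2 * mu).
Proof.
have [x' f'x'] := derive1_surjective (f' x + s).
rewrite -f'x' !fconjE f'x'.
have := sconvex_ge_tangent x x'.
have : s * (x' - x) - mu / 2 * (x' - x) ^+ 2 <= s ^+ 2 / (2 * mu).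
  rewrite -subr_ge0.
  have -> : s ^+ 2 / (2 * mu) - (s * (x' - x) - mu / 2 * (x' - x) ^+ 2) =
            (s - mu * (x' - x)) ^+ 2 / (2 * mu) by field; rewrite gt_eqF.
  by rewrite divr_ge0 ?sqr_ge0 // mulr_ge0 // ltW.
lra.
Qed.

Lemma fconj_ge_quadratic x s :
  fconj f (f' x) + s * x + s ^+ 2 / (2 * M) <= fconj f (f' x + s).
Proof.
rewrite fconjE; apply: le_trans (fconj_ge _ (x + s / M)).
have := smooth_le_quadratic x (x + s / M).
have -> : x + s / M - x = s / M by ring.
have -> : s ^+ 2 / (2 * M) = s * (s / M) - M / 2 * (s / M) ^+ 2.
  by field; rewrite gt_eqF.
lra.
Qed.

End SmoothStronglyConvex.

Section FiniteExtrema.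
Variables (R : realType) (n : nat).

Lemma maxf_ge (g : 'I_n -> R) i : g i <= maxf g.
Proof. by rewrite /maxf (bigD1 i) //= le_max lexx. Qed.

Lemma minf_le (g : 'I_n -> R) i : minf g <= g i.
Proof. by rewrite /minf (bigD1 i) //= ge_min lexx. Qed.

Lemma minf_gt0 (g : 'I_n -> R) : (0 < n)%N -> (forall i, 0 < g i) -> 0 < minf g.
Proof.
move=> n_gt0 g_gt0; apply: (big_ind (fun x => 0 < x)) => // [|x y x0 y0].
  exact: lt_le_trans (g_gt0 (Ordinal n_gt0)) (maxf_ge g _).
by rewrite lt_min x0 y0.
Qed.

End FiniteExtrema.

Section Incidence.
Variables (R : realType) (n E : nat) (A : 'M[R]_(n, E)).
Hypothesis A_incidence : incidence A.

Lemma incidence_n_gt0 a : eigenvalue (A^T *m A) a -> (0 < n)%N.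
Proof.
move=> /eigenvalueP[v _ v0].
have [l _|no_edge] := pickP (fun l : 'I_E => true).
  by have [i _] := A_incidence l; exact: leq_ltn_trans (leq0n i) (ltn_ord i).
by move: v0; apply: contraNP => _; apply/eqP/rowP => l; have := no_edge l.
Qed.

Lemma sum_Sedges (w : 'I_E -> R) : \sum_i \sum_(l in Sedges A i) w l = 2 * \sum_l w l.
Proof.
under eq_bigr do rewrite big_mkcond /=.
rewrite exchange_big mulr_sumr; apply: eq_bigr => l _ /=.
have [i [j [ij Ai Aj A0]]] := A_incidence l.
rewrite (bigD1 i) // (bigD1 j) 1?eq_sym //= big1 => [|k /andP[kj ki]].
  by rewrite !inE Ai Aj oner_eq0 oppr_eq0 oner_eq0 /= addr0 mulr_natl mulr2n.
by rewrite inE A0 ?eqxx.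
Qed.

Lemma Ndeg_le_Nmax i : (Ndeg A i <= Nmax A)%N.
Proof. exact: (@leq_bigmax _ (fun i => Ndeg A i)). Qed.

Lemma Nmax_gt0 : (forall i, 0 < Ndeg A i)%N -> (0 < n)%N -> (0 < Nmax A)%N.
Proof.
by move=> deg_gt0 n_gt0; exact: leq_trans (deg_gt0 (Ordinal n_gt0)) (Ndeg_le_Nmax _).
Qed.

Lemma Sedges_average_le (phi w : 'I_E -> R) (F0 : R) i :
  (0 < Ndeg A i)%N -> (forall l, 0 <= w l) -> (forall l, phi l <= F0 - w l) ->
  (Ndeg A i)%:R^-1 * \sum_(l in Sedges A i) phi l <=
  F0 - (Nmax A)%:R^-1 * \sum_(l in Sedges A i) w l.
Proof.
move=> deg_gt0 w_ge0 phi_le.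
have Ni_gt0 : (0 : R) < (Ndeg A i)%:R by rewrite ltr0n.
apply: (@le_trans _ _ ((Ndeg A i)%:R^-1 * \sum_(l in Sedges A i) (F0 - w l))).
  apply: ler_wpM2l; first by rewrite invr_ge0 ltW.
  by apply: ler_sum => l _; exact: phi_le.
rewrite sumrB sumr_const -/(Ndeg A i) -[F0 *+ _]mulr_natl mulrBr mulKf ?gt_eqF //.
have N_gt0 : (0 < Nmax A)%N := leq_trans deg_gt0 (Ndeg_le_Nmax i).
by rewrite lerD2l lerN2 ler_wpM2r ?sumr_ge0 // lef_pV2 ?posrE ?ltr0n ?ler_nat ?Ndeg_le_Nmax.
Qed.

Lemma SUCD_average_le (phi w : 'I_E -> R) (F0 : R) :
  (forall i, 0 < Ndeg A i)%N -> (0 < n)%N ->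
  (forall l, 0 <= w l) -> (forall l, phi l <= F0 - w l) ->
  n%:R^-1 * \sum_i ((Ndeg A i)%:R^-1 * \sum_(l in Sedges A i) phi l) <=
  F0 - 2 * (\sum_l w l) / (n%:R * (Nmax A)%:R).
Proof.
move=> deg_gt0 n_gt0 w_ge0 phi_le.
have N_gt0 : (0 : R) < (Nmax A)%:R by rewrite ltr0n Nmax_gt0.
have n_gt0' : (0 : R) < n%:R by rewrite ltr0n.
apply: (@le_trans _ _ (n%:R^-1 * \sum_i (F0 - (Nmax A)%:R^-1 * \sum_(l in Sedges A i) w l))).
  apply: ler_wpM2l; first by rewrite invr_ge0 ler0n.
  by apply: ler_sum => i _; exact: Sedges_average_le (deg_gt0 i) w_ge0 phi_le.
rewrite sumrB sumr_const card_ord -[F0 *+ _]mulr_natl -mulr_sumr sum_Sedges.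
suff -> : n%:R^-1 * (n%:R * F0 - (Nmax A)%:R^-1 * (2 * \sum_l w l)) =
          F0 - 2 * (\sum_l w l) / (n%:R * (Nmax A)%:R) by [].
by field; rewrite !gt_eqF.
Qed.

End Incidence.

Section MatrixColumns.
Variables (R : comPzRingType) (n E : nat) (A : 'M[R]_(n, E)).

Lemma mulmx_delta_col l i : (A *m (delta_mx l 0 : 'cV[R]_E)) i 0 = A i l.
Proof.
rewrite mxE (bigD1 l) //= big1 => [|k kl]; first by rewrite mxE !eqxx mulr1 addr0.
by rewrite mxE (negbTE kl) mulr0.
Qed.

Lemma mulmx_scaled_delta (t : R) l i :
  (A *m (t *: delta_mx l 0 : 'cV[R]_E)) i 0 = t * A i l.
Proof. by rewrite -scalemxAr mxE mulmx_delta_col. Qed.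

Lemma mulmx_tr_colE (x : 'cV[R]_n) l : (A^T *m x) l 0 = \sum_i A i l * x i 0.
Proof. by rewrite mxE; apply: eq_bigr => i _; rewrite mxE. Qed.

Lemma sum_mulmx_tr (v : 'cV[R]_E) (x : 'cV[R]_n) :
  \sum_i (A *m v) i 0 * x i 0 = \sum_l (A^T *m x) l 0 * v l 0.
Proof.
under eq_bigr do rewrite mxE mulr_suml.
rewrite exchange_big /=; apply: eq_bigr => l _.
by rewrite mulmx_tr_colE mulr_suml; apply: eq_bigr => i _; rewrite mulrAC mulrC.
Qed.

End MatrixColumns.

Lemma gram_col_curvature_le (R : realType) n E (A : 'M[R]_(n, E)) (mu : 'I_n -> R) gmax l :
  (0 < n)%N -> (forall i, 0 < mu i) -> (forall a, eigenvalue (A^T *m A) a -> a <= gmax) ->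
  \sum_i A i l ^+ 2 / mu i <= gmax / minf mu.
Proof.
move=> n_gt0 mu_gt0 gmax_ge; have mmin_gt0 := minf_gt0 n_gt0 mu_gt0.
apply: (@le_trans _ _ (\sum_i A i l ^+ 2 / minf mu)).
  apply: ler_sum => i _; apply: ler_wpM2l; first exact: sqr_ge0.
  by rewrite lef_pV2 ?posrE ?minf_le.
rewrite -mulr_suml; apply: ler_wpM2r; first by rewrite invr_ge0 ltW.
have e_norm : \sum_k (delta_mx l 0 : 'cV[R]_E) k 0 ^+ 2 = 1.
  rewrite (bigD1 l) //= big1 => [|k kl]; first by rewrite mxE !eqxx expr1n addr0.
  by rewrite mxE (negbTE kl) expr0n.
have := gram_sqr_le gmax_ge (delta_mx l 0 : 'cV[R]_E); rewrite e_norm mulr1.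
by under eq_bigr do rewrite mulmx_delta_col.
Qed.

Section DualFunction.
Variables (R : realType) (n E : nat) (A : 'M[R]_(n, E)).
Variables (f : 'I_n -> R -> R) (M mu : 'I_n -> R).
Hypotheses (M_gt0 : forall i, 0 < M i) (mu_gt0 : forall i, 0 < mu i).
Hypotheses (f_smooth : forall i, smooth (M i) (f i)).
Hypotheses (f_sconvex : forall i, strongly_convex (mu i) (f i)).
Local Notation F := (Fdual A f).

(* The point x(lam) with f_i'(x_i) = (A lam)_i, i.e. the maximiser in f_i^*((A lam)_i);
   partial_Fdual shows grad F(lam) = A^T x(lam). *)
Definition primal (lam : 'cV[R]_E) : 'cV[R]_n :=
  \col_i xget 0 (fun x => derive1 (f i) x = (A *m lam) i 0).

Lemma derive1_primal lam i : derive1 (f i) (primal lam i 0) = (A *m lam) i 0.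
Proof.
have [x f'x] :=
  derive1_surjective (M_gt0 i) (mu_gt0 i) (f_smooth i) (f_sconvex i) ((A *m lam) i 0).
by rewrite mxE; exact: (@xgetI _ 0 (fun x => derive1 (f i) x = (A *m lam) i 0) x f'x).
Qed.

Lemma Fdual_le_quadratic lam v : F (lam + v) <=
  F lam + \sum_i (A *m v) i 0 * primal lam i 0 + \sum_i (A *m v) i 0 ^+ 2 / (2 * mu i).
Proof.
rewrite /Fdual -!big_split /=; apply: ler_sum => i _.
rewrite mulmxDr [X in fconj _ X]mxE -(derive1_primal lam i).
exact: fconj_le_quadratic (M_gt0 i) (mu_gt0 i) (f_smooth i) (f_sconvex i) _ _.
Qed.

Lemma Fdual_ge_quadratic lam v :
  F lam + \sum_i (A *m v) i 0 * primal lam i 0 + \sum_i (A *m v) i 0 ^+ 2 / (2 * M i)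
  <= F (lam + v).
Proof.
rewrite /Fdual -!big_split /=; apply: ler_sum => i _.
rewrite mulmxDr [X in _ <= fconj _ X]mxE -(derive1_primal lam i).
exact: fconj_ge_quadratic (M_gt0 i) (mu_gt0 i) (f_smooth i) (f_sconvex i) _ _.
Qed.

Lemma partial_Fdual lam l : partial F lam l = (A^T *m primal lam) l 0.
Proof.
apply: (derive1_0_of_sqr_error (C := \sum_i A i l ^+ 2 / (2 * mu i))) => t.
rewrite scale0r addr0; set e : 'cV[R]_E := t *: delta_mx l 0.
have lin : \sum_i (A *m e) i 0 * primal lam i 0 = (A^T *m primal lam) l 0 * t.
  by rewrite mulmx_tr_colE mulr_suml; apply: eq_bigr => i _; rewrite mulmx_scaled_delta; ring.
have quad : \sum_i (A *m e) i 0 ^+ 2 / (2 * mu i) = (\sum_i A i l ^+ 2 / (2 * mu i)) * t ^+ 2.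
  by rewrite mulr_suml; apply: eq_bigr => i _; rewrite mulmx_scaled_delta; ring.
have quad_ge0 : 0 <= \sum_i (A *m e) i 0 ^+ 2 / (2 * M i).
  by apply: sumr_ge0 => i _; rewrite divr_ge0 ?sqr_ge0 // mulr_ge0 // ltW.
have := Fdual_le_quadratic lam e; have := Fdual_ge_quadratic lam e.
rewrite lin quad => lo up; rewrite ger0_norm; lra.
Qed.

Lemma Fdual_coordinate_descent lam l (L : R) : 0 < L ->
  \sum_i A i l ^+ 2 / mu i <= L ->
  F (lam - (L^-1 * partial F lam l) *: delta_mx l 0) <= F lam - partial F lam l ^+ 2 / (2 * L).
Proof.
move=> L_gt0 curv; set g := partial F lam l; set q := L^-1 * g.
rewrite -scaleNr; set e : 'cV[R]_E := - q *: delta_mx l 0.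
have lin : \sum_i (A *m e) i 0 * primal lam i 0 = - q * g.
  rewrite /g partial_Fdual mulmx_tr_colE mulr_sumr.
  by apply: eq_bigr => i _; rewrite mulmx_scaled_delta; ring.
have quad : \sum_i (A *m e) i 0 ^+ 2 / (2 * mu i) <= q ^+ 2 * (L / 2).
  rewrite (eq_bigr (fun i => q ^+ 2 / 2 * (A i l ^+ 2 / mu i))); last first.
    by move=> i _; rewrite mulmx_scaled_delta invfM; ring.
  rewrite -mulr_sumr (_ : q ^+ 2 * (L / 2) = q ^+ 2 / 2 * L); last by ring.
  by apply: ler_wpM2l; rewrite // divr_ge0 ?sqr_ge0.
have gq : g = L * q by rewrite /q mulrA divff ?gt_eqF // mul1r.
have := Fdual_le_quadratic lam e; rewrite lin.
have -> : g ^+ 2 / (2 * L) = L / 2 * q ^+ 2 by rewrite gq; field; rewrite gt_eqF.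
rewrite gq; nra.
Qed.

Lemma Fdual_PL lam lamstar (Mx gminp : R) : 0 < gminp ->
  (forall a, eigenvalue (A^T *m A) a -> 0 < a -> gminp <= a) ->
  0 < Mx -> (forall i, M i <= Mx) ->
  2 * (gminp / Mx) * (F lam - F lamstar) <= \sum_l (A^T *m primal lam) l 0 ^+ 2.
Proof.
move=> gminp_gt0 gminp_le Mx_gt0 M_le; set v := lamstar - lam.
have Mx'_gt0 : 0 < Mx^-1 by rewrite invr_gt0.
have cross := gram_cross_le gminp_gt0 gminp_le (primal lam) v Mx'_gt0.
have M_curv : Mx^-1 / 2 * \sum_i (A *m v) i 0 ^+ 2 <= \sum_i (A *m v) i 0 ^+ 2 / (2 * M i).
  rewrite mulr_sumr; apply: ler_sum => i _; rewrite mulrC.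
  apply: ler_wpM2l; first exact: sqr_ge0.
  by rewrite -invfM lef_pV2 ?posrE ?mulr_gt0 // mulrC ler_pM2r.
have := Fdual_ge_quadratic lam v; rewrite /v [lam + _]addrC subrK -/v sum_mulmx_tr => lo.
have D_le : F lam - F lamstar <= (\sum_l (A^T *m primal lam) l 0 ^+ 2) / (2 * Mx^-1 * gminp).
  by clearbody v; lra.
apply: le_trans (ler_wpM2l _ D_le) _; first by rewrite mulr_ge0 ?divr_ge0 ?ltW.
set S := \sum_l _; suff -> : 2 * (gminp / Mx) * (S / (2 * Mx^-1 * gminp)) = S by [].
by field; rewrite !gt_eqF.
Qed.

Lemma SUCD_expect_descent lam (L : R) : incidence A -> (forall i, 0 < Ndeg A i)%N ->
  (0 < n)%N -> 0 < L -> (forall l, \sum_i A i l ^+ 2 / mu i <= L) ->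
  SUCD_expect A f L lam <= F lam - (\sum_l partial F lam l ^+ 2) / (L * n%:R * (Nmax A)%:R).
Proof.
move=> A_inc deg_gt0 n_gt0 L_gt0 curv.
have w_ge0 l : 0 <= partial F lam l ^+ 2 / (2 * L).
  by rewrite divr_ge0 ?sqr_ge0 // mulr_ge0 // ltW.
apply: le_trans (SUCD_average_le A_inc deg_gt0 n_gt0 w_ge0 _) _.
  by move=> l; exact: Fdual_coordinate_descent.
have N_gt0 : (0 : R) < (Nmax A)%:R by rewrite ltr0n Nmax_gt0.
suff -> : 2 * (\sum_l partial F lam l ^+ 2 / (2 * L)) / (n%:R * (Nmax A)%:R) =
          (\sum_l partial F lam l ^+ 2) / (L * n%:R * (Nmax A)%:R) by [].
by rewrite -mulr_suml; field; rewrite (gt_eqF N_gt0) (gt_eqF L_gt0) pnatr_eq0 -lt0n n_gt0.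
Qed.

End DualFunction.

Lemma contraction_of_descent_PL (R : realFieldType) (Fnext F0 Fstar G K sigma : R) :
  0 < K -> Fnext <= F0 - G / K -> 2 * sigma * (F0 - Fstar) <= G ->
  Fnext - Fstar <= (1 - 2 * sigma / K) * (F0 - Fstar).
Proof.
move=> K_gt0 descent PL; have K'_ge0 : 0 <= K^-1 by rewrite invr_ge0 ltW.
have := ler_wpM2r K'_ge0 PL; rewrite mulrBl mul1r mulrAC; lra.
Qed.

Theorem theorem1 (R : realType) (n E : nat) (A : 'M[R]_(n, E))
  (f : 'I_n -> R -> R) (M mu : 'I_n -> R)
  (gmax gminp : R) (lamstar : 'cV[R]_E) :
  incidence A ->
  (forall i : 'I_n, (0 < Ndeg A i)%N) ->
  (forall i, 0 < M i) -> (forall i, 0 < mu i) ->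
  (forall i, smooth (M i) (f i)) ->
  (forall i, strongly_convex (mu i) (f i)) ->
  (* gmax = largest eigenvalue of A^T A *)
  eigenvalue (A^T *m A) gmax ->
  (forall a, eigenvalue (A^T *m A) a -> a <= gmax) ->
  (* gminp = smallest strictly positive eigenvalue of A^T A *)
  eigenvalue (A^T *m A) gminp -> 0 < gminp ->
  (forall a, eigenvalue (A^T *m A) a -> 0 < a -> gminp <= a) ->
  (* lamstar minimizes F *)
  (forall lam, Fdual A f lamstar <= Fdual A f lam) ->
  let L := gmax / minf mu in
  let sigmaA := gminp / maxf M in
  forall lam : 'cV[R]_E,
    SUCD_expect A f L lam - Fdual A f lamstar
    <= (1 - 2 * sigmaA / (L * n%:R * (Nmax A)%:R)) * (Fdual A f lam - Fdual A f lamstar).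
Proof.
move=> A_inc deg_gt0 M_gt0 mu_gt0 f_smooth f_sconvex gmax_eig gmax_ge gminp_eig gminp_gt0.
move=> gminp_le _ L sigmaA lam.
have n_gt0 := incidence_n_gt0 A_inc gmax_eig.
have Mmax_gt0 : 0 < maxf M := lt_le_trans (M_gt0 (Ordinal n_gt0)) (maxf_ge M _).
have L_gt0 : 0 < L.
  by rewrite divr_gt0 ?minf_gt0 // (lt_le_trans gminp_gt0) ?gmax_ge.
have curv l : \sum_i A i l ^+ 2 / mu i <= L := gram_col_curvature_le l n_gt0 mu_gt0 gmax_ge.
apply: contraction_of_descent_PL.
- by apply: mulr_gt0; [apply: mulr_gt0 |]; rewrite ?ltr0n ?Nmax_gt0.
- exact: (SUCD_expect_descent M_gt0 mu_gt0 f_smooth f_sconvex lam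
    A_inc deg_gt0 n_gt0 L_gt0 curv).
- under eq_bigr do rewrite (partial_Fdual A M_gt0 mu_gt0 f_smooth f_sconvex).
  exact: (Fdual_PL M_gt0 mu_gt0 f_smooth f_sconvex lam lamstar
    gminp_gt0 gminp_le Mmax_gt0 (maxf_ge M)).
Qed.
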